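(* Let $(G_k)_{k\in\mathbb Z}$ be a gibonacci sequence. For every positive integer $n$ and every integer $t$, \begin{equation*} \begin{split} 44\sum_{j = 1}^n G_{j + t}^5 &= -\left(G_{n + t + 3}^5 - G_{t + 3}^5\right) + 7\left(G_{n + t + 2}^5 - G_{t + 2}^5\right) + 47\left(G_{n + t + 1}^5 - G_{t + 1}^5\right)\\ &\qquad + 31\left(G_{n + t}^5 - G_t^5\right) - 9\left(G_{n + t - 1}^5 - G_{t - 1}^5\right) - \left(G_{n + t - 2}^5 - G_{t - 2}^5\right) \end{split} \end{equation*} and \begin{equation*} \begin{split} 44\sum_{j = 1}^n (-1)^{j - 1}G_{j + t}^5 &= -\left((-1)^{n + 1}G_{n + t + 3}^5 + G_{t + 3}^5\right) + 9\left((-1)^{n + 1}G_{n + t + 2}^5 + G_{t + 2}^5\right)\\ &\quad + 31\left((-1)^{n + 1}G_{n + t + 1}^5 + G_{t + 1}^5\right) - 47\left((-1)^{n + 1}G_{n + t}^5 + G_t^5\right)\\ &\quad + 7\left((-1)^{n + 1}G_{n + t - 1}^5 + G_{t - 1}^5\right) + \left((-1)^{n + 1}G_{n + t - 2}^5 + G_{t - 2}^5\right). \end{split} \end{equation*}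
   Context: A gibonacci sequence $(G_k)_{k\in\mathbb Z}$ is defined by arbitrary initial values $G_0=a$, $G_1=b$ (numbers, not both zero) and $G_k=G_{k-1}+G_{k-2}$ for all integers $k$ (equivalently $G_{-k}=G_{-(k-2)}-G_{-(k-1)}$ extends it to negative indices). *)

From mathcomp Require Import all_boot all_order all_algebra.
Set Implicit Arguments. Unset Strict Implicit. Unset Printing Implicit Defensive.
Import Order.TTheory GRing.Theory Num.Theory.
Local Open Scope ring_scope.

Definition gibonacci (R : numFieldType) (G : int -> R) : Prop :=
  (forall k : int, G k = G (k - 1) + G (k - 2)) /\ (G 0 != 0 \/ G 1 != 0).

From mathcomp Require Import all_boot all_order all_algebra.
From mathcomp Require Import ring.
Import Order.TTheory GRing.Theory Num.Theory.
Local Open Scope ring_scope.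

(* Both sums telescope.  The right-hand sides are F (n + t) - F t and
   (-1)^(n+1) H (n + t) + H t, where F = pow5_antidiff and
   H = pow5_alt_antidiff are combinations of six consecutive fifth powers
   with F (m + 1) - F m = 44 G_(m+1)^5 and H (m + 1) + H m = 44 G_(m+1)^5.
   Writing G_(m-2), ..., G_(m+4) as integer combinations of G_m and G_(m+1)
   turns these two step identities into polynomial identities in two
   variables. *)

Lemma telescope_alt_sumr (R : pzRingType) (n : nat) (u : nat -> R) :
  \sum_(0 <= k < n) (-1) ^+ k * (u k.+1 + u k) = (-1) ^+ n.+1 * u n + u 0%N.
Proof.
rewrite (telescope_sumr_eq (fun k => (-1) ^+ k.+1 * u k)) // => [|k _].
  by rewrite expr1 mulN1r opprK.
by rewrite !exprS !mulN1r opprK mulNr opprK mulrDr.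
Qed.

Section GibonacciFifthPowers.

Variables (R : comPzRingType) (G : int -> R).
Hypothesis G_rec : forall k, G k = G (k - 1) + G (k - 2).

Lemma gib_add2 k : G (k + 2) = G (k + 1) + G k.
Proof. by rewrite [LHS]G_rec; congr (G _ + G _); ring. Qed.

Lemma shift_indicesE (m : int) :
  (m + 1 + 3 = m + 4) * (m + 1 + 2 = m + 3) * (m + 1 + 1 = m + 2)
  * (m + 1 - 1 = m) * (m + 1 - 2 = m - 1) * (m + 2 + 2 = m + 4)
  * (m + 2 + 1 = m + 3).
Proof. by do ![split | rewrite addrK | rewrite -addrA]. Qed.

Lemma gib_window m :
  [/\ G (m - 2) = 2 * G m - G (m + 1), G (m - 1) = G (m + 1) - G m,
      G (m + 2) = G m + G (m + 1), G (m + 3) = G m + 2 * G (m + 1)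
    & G (m + 4) = 2 * G m + 3 * G (m + 1)].
Proof.
have G_pred : G (m - 1) = G (m + 1) - G m.
  by rewrite [G (m + 1)]G_rec !shift_indicesE addrAC subrr add0r.
have G3 := gib_add2 (m + 1); have G4 := gib_add2 (m + 2).
rewrite !shift_indicesE in G3 G4.
split=> //.
- by apply: (addrI (G (m - 1))); rewrite -G_rec G_pred; ring.
- by rewrite gib_add2 addrC.
- by rewrite G3 gib_add2; ring.
- by rewrite G4 G3 gib_add2; ring.
Qed.

Definition pow5_antidiff (m : int) : R :=
  - G (m + 3) ^+ 5 + 7 * G (m + 2) ^+ 5 + 47 * G (m + 1) ^+ 5
  + 31 * G m ^+ 5 - 9 * G (m - 1) ^+ 5 - G (m - 2) ^+ 5.

Definition pow5_alt_antidiff (m : int) : R :=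
  - G (m + 3) ^+ 5 + 9 * G (m + 2) ^+ 5 + 31 * G (m + 1) ^+ 5
  - 47 * G m ^+ 5 + 7 * G (m - 1) ^+ 5 + G (m - 2) ^+ 5.

Lemma pow5_antidiffS m :
  pow5_antidiff (m + 1) - pow5_antidiff m = 44 * G (m + 1) ^+ 5.
Proof.
rewrite /pow5_antidiff !shift_indicesE.
by have [-> -> -> -> ->] := gib_window m; ring.
Qed.

Lemma pow5_alt_antidiffS m :
  pow5_alt_antidiff (m + 1) + pow5_alt_antidiff m = 44 * G (m + 1) ^+ 5.
Proof.
rewrite /pow5_alt_antidiff !shift_indicesE.
by have [-> -> -> -> ->] := gib_window m; ring.
Qed.

Lemma sum_gib_pow5 (n : nat) (t : int) :
  44 * \sum_(1 <= j < n.+1) G (j%:Z + t) ^+ 5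
  = pow5_antidiff (n%:Z + t) - pow5_antidiff t.
Proof.
rewrite big_add1 /= mulr_sumr.
rewrite (telescope_sumr_eq (fun k => pow5_antidiff (k%:Z + t))) ?add0r // => k _.
by rewrite -[k.+1]addn1 PoszD addrAC pow5_antidiffS.
Qed.

Lemma alt_sum_gib_pow5 (n : nat) (t : int) :
  44 * \sum_(1 <= j < n.+1) (-1) ^+ j.-1 * G (j%:Z + t) ^+ 5
  = (-1) ^+ n.+1 * pow5_alt_antidiff (n%:Z + t) + pow5_alt_antidiff t.
Proof.
rewrite big_add1 /= mulr_sumr.
rewrite -[in X in _ = _ + X](add0r t).
rewrite -(telescope_alt_sumr _ n (fun k => pow5_alt_antidiff (k%:Z + t))).
apply: eq_bigr => k _.
by rewrite -[k.+1]addn1 PoszD addrAC pow5_alt_antidiffS mulrCA.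
Qed.

End GibonacciFifthPowers.

Theorem proposition1 (R : numFieldType) (G : int -> R) (n : nat) (t : int) :
  gibonacci G -> (0 < n)%N ->
  (44 * \sum_(1 <= j < n.+1) G (j%:Z + t) ^+ 5 =
     - (G (n%:Z + t + 3) ^+ 5 - G (t + 3) ^+ 5)
     + 7 * (G (n%:Z + t + 2) ^+ 5 - G (t + 2) ^+ 5)
     + 47 * (G (n%:Z + t + 1) ^+ 5 - G (t + 1) ^+ 5)
     + 31 * (G (n%:Z + t) ^+ 5 - G t ^+ 5)
     - 9 * (G (n%:Z + t - 1) ^+ 5 - G (t - 1) ^+ 5)
     - (G (n%:Z + t - 2) ^+ 5 - G (t - 2) ^+ 5))
  /\
  (44 * \sum_(1 <= j < n.+1) (-1) ^+ j.-1 * G (j%:Z + t) ^+ 5 =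
     - ((-1) ^+ n.+1 * G (n%:Z + t + 3) ^+ 5 + G (t + 3) ^+ 5)
     + 9 * ((-1) ^+ n.+1 * G (n%:Z + t + 2) ^+ 5 + G (t + 2) ^+ 5)
     + 31 * ((-1) ^+ n.+1 * G (n%:Z + t + 1) ^+ 5 + G (t + 1) ^+ 5)
     - 47 * ((-1) ^+ n.+1 * G (n%:Z + t) ^+ 5 + G t ^+ 5)
     + 7 * ((-1) ^+ n.+1 * G (n%:Z + t - 1) ^+ 5 + G (t - 1) ^+ 5)
     + ((-1) ^+ n.+1 * G (n%:Z + t - 2) ^+ 5 + G (t - 2) ^+ 5)).
Proof.
move=> [G_rec _] _.
rewrite sum_gib_pow5 // alt_sum_gib_pow5 //.
by rewrite /pow5_antidiff /pow5_alt_antidiff; split; ring.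
Qed.
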